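(* Let $k,n\ge1$, let $M=\Gamma(\mathbb Z\,\overrightarrow{\times}\,G,(k,0))$ with $G$ a Dedekind $\sigma$-complete $\ell$-group, let $x$ be an $n$-dimensional observable on $M$ and $F=F_x$. Let $i\in\{1,\ldots,k\}$, $\mathbf s\in T_i$, and $\mathbf t\in\mathbb R^n$ with $\pi_i(\mathbf s)\ll\mathbf t\le\mathbf s$. Then $\mathbf t\in T_i$ and $\mathbf t\approx_i\mathbf s$; moreover $\pi_i(\mathbf s)=\bigwedge\{\mathbf t\in\mathbb R^n\colon\pi_i(\mathbf s)\ll\mathbf t\le\mathbf s\}$ (componentwise infimum in $\mathbb R^n$), and the element $\bigwedge\{F(\mathbf t)\colon\pi_i(\mathbf s)\ll\mathbf t\le\mathbf s\}$ exists in $M$ and belongs to $M_i$.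
   Context: $\mathbb Z\,\overrightarrow{\times}\,G$ is $\mathbb Z\times G$ with lexicographic order; $\Gamma(K,v)=([0,v];\oplus,',0,v)$ with $a\oplus b=(a+b)\wedge v$, $a'=v-a$. Partial addition on $M$: $a+b$ defined iff the group sum is $\le(k,0)$. Summable sequence: every finite subfamily has a sum; its sum is the supremum of finite partial sums. An $n$-dimensional observable is $x:\mathcal B(\mathbb R^n)\to M$ with $x(\mathbb R^n)=1$ and $x(\bigcup A_m)=\sum_m x(A_m)$ (summable) for pairwise disjoint Borel $A_m$. $F_x(s_1,\ldots,s_n)=x((-\infty,s_1)\times\cdots\times(-\infty,s_n))$. $M_j=\{(j,g)\in M\}$, $T_j=\{\mathbf s\colon F(\mathbf s)\in M_j\}$. For $\mathbf s\in T_i$ ($i\ge1$), $\pi^i_j(\mathbf s)=\inf\{r\colon(s_1,\ldots,s_{j-1},r,s_{j+1},\ldots,s_n)\in T_i\}$, $\pi_i(\mathbf s)=(\pi^i_1(\mathbf s),\ldots,\pi^i_n(\mathbf s))$ (characteristic point associated to $\mathbf s$). For $\mathbf s,\mathbf t\in T_i$, $\mathbf s\approx_i\mathbf t$ iff $\pi_i(\mathbf s)=\pi_i(\mathbf t)$. $\mathbf a\le\mathbf b$ means $a_j\le b_j$ for all $j$; $\mathbf a\ll\mathbf b$ means $a_j<b_j$ for all $j$. *)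

From HB Require Import structures.
From mathcomp Require Import all_boot all_order all_algebra.
From mathcomp Require Import all_classical all_reals all_analysis.
Set Implicit Arguments. Unset Strict Implicit. Unset Printing Implicit Defensive.
Import Order.TTheory GRing.Theory Num.Theory.
Import numFieldNormedType.Exports.
Local Open Scope classical_set_scope.
Local Open Scope ring_scope.

Definition is_ub {T : Type} (le : T -> T -> Prop) (P : T -> Prop) (c : T) :=
  forall y, P y -> le y c.
Definition is_lb {T : Type} (le : T -> T -> Prop) (P : T -> Prop) (c : T) :=
  forall y, P y -> le c y.
Definition is_sup {T : Type} (le : T -> T -> Prop) (P : T -> Prop) (c : T) :=
  is_ub le P c /\ forall z, is_ub le P z -> le c z.
Definition is_inf {T : Type} (le : T -> T -> Prop) (P : T -> Prop) (c : T) :=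
  is_lb le P c /\ forall z, is_lb le P z -> le z c.

(** * Dedekind sigma-complete (abelian) l-groups: a Z-module G with an order
    relation [le] which is a translation-invariant lattice order, such that every
    nonempty countable subset (= range of a sequence) bounded above has a sup. *)
Definition dsc_lgroup (G : zmodType) (le : G -> G -> Prop) : Prop :=
  [/\ (forall a, le a a),
      (forall a b, le a b -> le b a -> a = b) /\
      (forall a b c, le a b -> le b c -> le a c),
      (forall a b c, le a b -> le (a + c) (b + c)),
      (forall a b, (exists c, is_sup le (fun y => y = a \/ y = b) c) /\
                   (exists c, is_inf le (fun y => y = a \/ y = b) c)) &
      (forall u : nat -> G, (exists b, forall m, le (u m) b) ->
         exists c, is_sup le (fun y => exists m, y = u m) c)].

Section Lex.
Variables (G : zmodType) (le : G -> G -> Prop) (k : nat).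

Definition lexle (a b : int * G) : Prop :=
  (a.1 < b.1)%R \/ (a.1 = b.1 /\ le a.2 b.2).

Definition padd (a b : int * G) : int * G := (a.1 + b.1, a.2 + b.2).

Definition unitM : int * G := ((k : int), 0).
Definition inM (a : int * G) : Prop := lexle (0, 0) a /\ lexle a unitM.

Definition Mj (j : int) (a : int * G) : Prop := inM a /\ a.1 = j.

Definition is_supM (P : int * G -> Prop) (c : int * G) : Prop :=
  [/\ inM c, (forall y, P y -> lexle y c) &
      forall z, inM z -> (forall y, P y -> lexle y z) -> lexle c z].
Definition is_infM (P : int * G -> Prop) (c : int * G) : Prop :=
  [/\ inM c, (forall y, P y -> lexle c y) &
      forall z, inM z -> (forall y, P y -> lexle z y) -> lexle z c].

Definition psum (s : seq nat) (u : nat -> int * G) : int * G :=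
  (\sum_(m <- s) (u m).1, \sum_(m <- s) (u m).2).

(** [u] (a sequence in M) is summable with sum [c]: every finite subfamily has a
    sum in M (i.e. its group sum is <= (k,0)), and [c] is the supremum in M of
    the finite partial sums. *)
Definition summable_to (u : nat -> int * G) (c : int * G) : Prop :=
  (forall s : seq nat, uniq s -> lexle (psum s u) unitM) /\
  is_supM (fun y => exists s : seq nat, uniq s /\ y = psum s u) c.
End Lex.

Section Obs.
Variables (R : realType) (n : nat).

Definition borel_n : set (set 'rV[R]_n) := <<s [set A : set 'rV[R]_n | open A] >>.

Variables (G : zmodType) (le : G -> G -> Prop) (k : nat).

Definition observable (x : set 'rV[R]_n -> int * G) : Prop :=
  [/\ (forall A, borel_n A -> inM le k (x A)),
      x setT = unitM G k &
      forall A : nat -> set 'rV[R]_n, (forall m, borel_n (A m)) ->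
        (forall m1 m2, m1 <> m2 -> A m1 `&` A m2 = set0) ->
        summable_to le k (fun m => x (A m)) (x (\bigcup_m A m))].

Variable x : set 'rV[R]_n -> int * G.

Definition Fx (s : 'rV[R]_n) : int * G :=
  x [set u | forall j, u ord0 j < s ord0 j].

Definition Tset (j : int) : set 'rV[R]_n := [set s | (Fx s).1 = j].

Definition pi_coord (i : int) (s : 'rV[R]_n) (j : 'I_n) : R :=
  inf [set r : R | Tset i (\row_l (if l == j then r else s ord0 l))].
Definition pi_pt (i : int) (s : 'rV[R]_n) : 'rV[R]_n :=
  \row_j pi_coord i s j.

Definition approx_i (i : int) (s t : 'rV[R]_n) : Prop :=
  [/\ Tset i s, Tset i t & pi_pt i s = pi_pt i t].
End Obs.

Definition vle (R : realType) n (a b : 'rV[R]_n) : Prop := forall j, a ord0 j <= b ord0 j.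
Definition vlt (R : realType) n (a b : 'rV[R]_n) : Prop := forall j, a ord0 j < b ord0 j.

(* An observable x behaves, in its first coordinate, like an integer-valued
   measure: along a decreasing sequence of Borel sets with empty intersection
   the first coordinate of x eventually vanishes, and every lower bound of the
   values of x is <= 0, i.e. x is continuous from above.
   Let p = pi_i(s) << t <= s.  Each coordinate of t exceeds the infimum that
   defines the matching coordinate of p, so the box below s minus the box below
   t is covered by n sets of x-value with first coordinate 0; hence t lies in
   T_i, and the same argument applied to single coordinates gives
   pi_i(t) = pi_i(s).  Finally, the infimum of F over p << t <= s is the value
   of x on the closed box below p, the intersection of the boxes below a
   sequence decreasing to p, and it lies in M_i by continuity from above. *)

From HB Require Import structures.
From mathcomp Require Import all_boot all_order all_algebra.
From mathcomp Require Import all_classical all_reals all_analysis.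
From mathcomp Require Import zify.
Import Order.TTheory GRing.Theory Num.Theory.
Import numFieldNormedType.Exports.
Local Open Scope classical_set_scope.
Local Open Scope ring_scope.

Set Implicit Arguments. Unset Strict Implicit.

Lemma inf_setI_le (R : realType) (A : set R) (c : R) : (exists2 a, A a & a <= c) ->
  inf A = inf (A `&` [set r | r <= c]).
Proof.
move=> [a Aa ac]; have Ac_ne : (A `&` [set r | r <= c]) !=set0 by exists a.
have [lbA|nlbA] := pselect (has_lbound A); last first.
  have nlbAc : ~ has_inf (A `&` [set r | r <= c]).
    move=> [_ [l lbAc]]; apply: nlbA; exists (Num.min l c) => y Ay.
    have [yc|/ltW cy] := leP y c; rewrite ge_min; last by rewrite cy orbT.
    by rewrite (lbAc y).
  by rewrite !inf_out // => -[].
have lbAc : has_lbound (A `&` [set r | r <= c]).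
  by case: lbA => l lbA; exists l => y [/lbA].
apply/eqP; rewrite eq_le; apply/andP; split.
  by apply: lb_le_inf => // y [Ay _]; apply: (ge_inf lbA).
apply: lb_le_inf => [|y Ay]; first by exists a.
have [yc|/ltW cy] := leP y c; first by apply: (ge_inf lbAc).
by apply: (le_trans _ cy); apply: (le_trans _ ac); apply: (ge_inf lbAc).
Qed.

Lemma le_of_lt_addinvS (R : realType) (u p : R) :
  (forall m : nat, u < p + m.+1%:R^-1) -> u <= p.
Proof.
move=> up; rewrite leNgt; apply/negP => /ltr_add_invr [m].
by rewrite ltNge (ltW (up m)).
Qed.

Section BorelSets.
Variables (R : realType) (n : nat).
Local Notation borel := (g_sigma_algebraType [set A : set 'rV[R]_n | open A]).
Implicit Types A B : set 'rV[R]_n.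

Lemma borel_n0 : borel_n (@set0 'rV[R]_n).
Proof. exact: (@measurable0 _ borel). Qed.

Lemma borel_nU A B : borel_n A -> borel_n B -> borel_n (A `|` B).
Proof. exact: (@measurableU _ borel). Qed.

Lemma borel_nD A B : borel_n A -> borel_n B -> borel_n (A `\` B).
Proof. exact: (@measurableD _ borel). Qed.

Lemma borel_n_bigcap (F : nat -> set 'rV[R]_n) :
  (forall m, borel_n (F m)) -> borel_n (\bigcap_m F m).
Proof. exact: (@bigcapT_measurable _ borel). Qed.

Lemma borel_n_bigsetU (I : Type) (r : seq I) (F : I -> set 'rV[R]_n) :
  (forall l, borel_n (F l)) -> borel_n (\big[setU/set0]_(l <- r) F l).
Proof.
move=> bF; elim: r => [|l r IH]; first by rewrite big_nil; exact: borel_n0.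
by rewrite big_cons; exact: borel_nU.
Qed.

Definition box (s : 'rV[R]_n) : set 'rV[R]_n := [set u | forall j, u ord0 j < s ord0 j].

Lemma box_subset v w : vle v w -> box v `<=` box w.
Proof. by move=> vw u uv j; exact: lt_le_trans (uv j) (vw j). Qed.

Lemma borel_n_box s : borel_n (box s).
Proof.
have -> : box s = \bigcap_(j in [set: 'I_n]) [set u | u ord0 j < s ord0 j].
  by apply/seteqP; split=> u hu j => [_|]; exact: hu.
apply: (@fin_bigcap_measurable _ borel); first exact: finite_finset.
move=> j _; apply: sub_sigma_algebra.
apply: (@open_comp _ _ (fun u : 'rV[R]_n => u ord0 j) [set r | r < s ord0 j]).
  by move=> u _; exact: coord_continuous.
exact: open_lt.
Qed.

End BorelSets.

Definition set_coord (T : Type) (n : nat) (v : 'rV[T]_n) (l : 'I_n) (r : T) : 'rV[T]_n :=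
  \row_l' (if l' == l then r else v ord0 l').

Lemma set_coordE (T : Type) (n : nat) (v : 'rV[T]_n) l r l' :
  set_coord v l r ord0 l' = if l' == l then r else v ord0 l'.
Proof. exact: mxE. Qed.

Lemma set_coord_id (T : Type) (n : nat) (v : 'rV[T]_n) l : set_coord v l (v ord0 l) = v.
Proof. by apply/rowP => l'; rewrite set_coordE; case: eqP => [->|]. Qed.

Lemma psumE (G : zmodType) (s : seq nat) (u : nat -> int * G) :
  psum s u = \sum_(m <- s) u m.
Proof.
rewrite /psum; elim: s => [|m s IH]; first by rewrite !big_nil.
by rewrite !big_cons -IH.
Qed.

Lemma sum_uniq_supp01 (V : zmodType) (u : nat -> V) (s : seq nat) :
  (forall m, (1 < m)%N -> u m = 0) -> uniq s ->
  \sum_(m <- s) u m = u 0%N *+ (0%N \in s) + u 1%N *+ (1%N \in s).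
Proof.
move=> u0; elim: s => [|m s IH]; first by rewrite big_nil !in_nil !mulr0n addr0.
rewrite /= big_cons !in_cons => /andP[ms /IH ->].
case: m ms => [|[|m]] ms /=; last by rewrite u0 // add0r.
- by rewrite (negbTE ms) mulr0n add0r mulr1n.
- by rewrite (negbTE ms) mulr0n addr0 mulr1n addrC.
Qed.

Section LGroup.
Variables (G : zmodType) (le : G -> G -> Prop).
Hypothesis leG : dsc_lgroup le.

Lemma lgroup_le_refl (a : G) : le a a.
Proof. by case: leG. Qed.

Lemma lgroup_le_anti (a b : G) : le a b -> le b a -> a = b.
Proof. by case: leG => _ [+ _] _ _ _; apply. Qed.

Lemma lgroup_le_trans (a b c : G) : le a b -> le b c -> le a c.
Proof. by case: leG => _ [_ +] _ _ _; apply. Qed.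

Lemma lgroup_leD2r (a b c : G) : le a b -> le (a + c) (b + c).
Proof. by case: leG => _ _ + _ _; apply. Qed.

Lemma lgroup_trivial : (forall f : G, le 0 f -> f = 0) -> forall e : G, e = 0.
Proof.
move=> pos0 e; case: leG => _ _ _ /(_ e 0) [_ [m [mlb _]]] _.
have m0 : m = 0.
  have /(lgroup_leD2r (- m)) : le m 0 by apply: mlb; right.
  by rewrite subrr add0r => /pos0 /eqP; rewrite oppr_eq0 => /eqP.
by apply: pos0; rewrite -m0; apply: mlb; left.
Qed.

Implicit Types a b c : int * G.

Lemma lexle_refl a : lexle le a a.
Proof. by right; split => //; exact: lgroup_le_refl. Qed.

Lemma lexle_trans a b c : lexle le a b -> lexle le b c -> lexle le a c.
Proof.
case=> [h1|[e1 h1]] [h2|[e2 h2]]; first by left; exact: lt_trans h2.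
- by left; rewrite -e2.
- by left; rewrite e1.
by right; split; [rewrite e1 | exact: lgroup_le_trans h2].
Qed.

Lemma lexle_anti a b : lexle le a b -> lexle le b a -> a = b.
Proof.
case: a b => [a1 a2] [b1 b2] [h1|[/= e1 h1]] [h2|[e2 h2]] //=.
- by move: (lt_trans h1 h2); rewrite ltxx.
- by move: h1; rewrite e2 ltxx.
- by move: h2; rewrite e1 ltxx.
by rewrite e1 (lgroup_le_anti h1 h2).
Qed.

Lemma lexle_fst a b : lexle le a b -> a.1 <= b.1.
Proof. by case=> [/ltW|[-> _]]. Qed.

Lemma lexleD2r a b c : lexle le (a + c) (b + c) <-> lexle le a b.
Proof.
suff lexleD a' b' c' : lexle le a' b' -> lexle le (a' + c') (b' + c').
  split=> [/(lexleD _ _ (- c))|]; last exact: lexleD.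
  by rewrite !addrK.
case=> [h|[e h]]; [left | right] => /=; first by rewrite ltrD2r.
by rewrite e; split => //; exact: lgroup_leD2r.
Qed.

Lemma lexleD2l a b c : lexle le (c + a) (c + b) <-> lexle le a b.
Proof. by rewrite ![c + _]addrC lexleD2r. Qed.

Lemma lexle_addr a b : lexle le 0 b -> lexle le a (a + b).
Proof. by move/(lexleD2r _ _ a).2; rewrite add0r addrC. Qed.

Lemma lexle_trivial a b : (forall e : G, e = 0) -> a.1 <= b.1 -> lexle le a b.
Proof.
move=> triv; rewrite le_eqVlt => /orP[/eqP e|]; last by left.
by right; split => //; rewrite (triv a.2) (triv b.2); exact: lgroup_le_refl.
Qed.

(* If d < a.1, then a - (0, f) is still an upper bound in M for every f >= 0,
   so G has no nonzero positive element and is trivial (this is the only use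
   of the lattice structure of G); then (d, 0) is a smaller upper bound. *)
Lemma supM_fst_le k P a (d : int) : is_supM le k P a ->
  (forall y, P y -> y.1 <= d) -> 0 <= d -> a.1 <= d.
Proof.
move=> [[a0 ak] aub aleast] Pd d0; rewrite leNgt; apply/negP => da.
have triv : forall e : G, e = 0.
  apply: lgroup_trivial => f f0.
  have af : lexle le (a - (0, f)) a.
    by rewrite -[X in lexle _ _ X](subrK (0, f)); apply: lexle_addr; right.
  have : a - (0, f) = a.
    apply: (lexle_anti af (aleast _ _ _)) => [|y /Pd yd]; last first.
      by left; rewrite /= subr0; exact: le_lt_trans da.
    by split; [left; rewrite /= subr0; exact: le_lt_trans d0 da | exact: lexle_trans af ak].
  by move=> /eqP; rewrite -subr_eq0 addrC addKr oppr_eq0 => /eqP/(congr1 snd).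
have /lexle_fst : lexle le a (d, 0).
  apply: aleast => [|y /Pd yd]; last exact: lexle_trivial.
  by split; apply: lexle_trivial => //=; rewrite (le_trans (ltW da)) ?(lexle_fst ak).
by rewrite leNgt da.
Qed.

Lemma is_supM_max k P a c : is_supM le k P a -> P c ->
  (forall y, P y -> lexle le y c) -> lexle le 0 c -> a = c.
Proof.
move=> [[_ ak] aub aleast] Pc cub c0; have ca := aub _ Pc.
apply: (lexle_anti (aleast _ _ cub) ca).
by split=> //; exact: lexle_trans ca ak.
Qed.

Section Observable.
Variables (R : realType) (n : nat) (k : nat) (x : set 'rV[R]_n -> int * G).
Hypothesis obs_x : observable le k x.
Implicit Types A B : set 'rV[R]_n.

Lemma observable_inM A : borel_n A -> inM le k (x A).
Proof. by case: obs_x => + _ _; apply. Qed.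

Lemma observable_ge0 A : borel_n A -> lexle le 0 (x A).
Proof. by case/observable_inM. Qed.

Lemma observable_sigma (A : nat -> set 'rV[R]_n) : (forall m, borel_n (A m)) ->
  (forall m1 m2, m1 <> m2 -> A m1 `&` A m2 = set0) ->
  summable_to le k (fun m => x (A m)) (x (\bigcup_m A m)).
Proof. by case: obs_x => _ _; apply. Qed.

Lemma observable0 : x set0 = 0.
Proof.
have [_ [_ ub _]] := observable_sigma (fun=> @borel_n0 R n) (fun _ _ _ => setI0 _).
rewrite bigcup0 // in ub.
have /ub : exists s, uniq s /\ x set0 + x set0 = psum s (fun=> x set0).
  by exists [:: 0%N; 1%N]; rewrite psumE !big_cons big_nil addr0.
rewrite -[X in lexle _ _ X]add0r lexleD2r // => x0.
exact: lexle_anti x0 (observable_ge0 (@borel_n0 R n)).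
Qed.

Lemma observableU A B : borel_n A -> borel_n B -> A `&` B = set0 ->
  x (A `|` B) = x A + x B.
Proof.
move=> bA bB AB0; pose f m := if m is 0%N then A else if m is 1%N then B else set0.
have bf m : borel_n (f m) by case: m => [|[|m]] //; exact: borel_n0.
have df m1 m2 : m1 <> m2 -> f m1 `&` f m2 = set0.
  by case: m1 m2 => [|[|m1]] [|[|m2]] //= _; rewrite ?setI0 ?set0I // setIC.
have fAB : \bigcup_m f m = A `|` B.
  apply/seteqP; split=> [u [[|[|m]] _ fu] //|u [Au|Bu]];
    [by left | by right | by exists 0%N | by exists 1%N].
have [_ supAB] := observable_sigma bf df; rewrite fAB in supAB.
have [A0 B0] := (observable_ge0 bA, observable_ge0 bB).
apply: (is_supM_max supAB) => [|_ [s [us ->]]|].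
- by exists [:: 0%N; 1%N]; rewrite psumE !big_cons big_nil addr0.
- rewrite psumE (@sum_uniq_supp01 _ (fun m => x (f m))) //=; last first.
    by case=> [|[|m]] // _; exact: observable0.
  case: (0%N \in s); case: (1%N \in s); rewrite ?mulr1n ?mulr0n ?addr0 ?add0r.
  + exact: lexle_refl.
  + exact: lexle_addr.
  + by rewrite addrC; exact: lexle_addr.
  + exact: lexle_trans A0 (lexle_addr _ B0).
- exact: lexle_trans A0 (lexle_addr _ B0).
Qed.

Lemma observableD A B : borel_n A -> borel_n B -> A `<=` B ->
  x B = x A + x (B `\` A).
Proof.
move=> bA bB AB; rewrite -{1}(setDUK AB) observableU //; first exact: borel_nD.
exact: setDIK.
Qed.

Lemma le_observable A B : borel_n A -> borel_n B -> A `<=` B -> lexle le (x A) (x B).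
Proof.
move=> bA bB AB; rewrite (observableD bA bB AB).
by apply: lexle_addr => //; apply: observable_ge0; exact: borel_nD.
Qed.

Lemma observable_bigsetU (I : choiceType) (A : I -> set 'rV[R]_n) (r : seq I) :
  (forall l, borel_n (A l)) -> (forall l1 l2, l1 <> l2 -> A l1 `&` A l2 = set0) ->
  uniq r -> x (\big[setU/set0]_(l <- r) A l) = \sum_(l <- r) x (A l).
Proof.
move=> bA dA; elim: r => [|l r IH]; first by rewrite !big_nil observable0.
rewrite /= !big_cons => /andP[lr /IH <-]; apply: observableU => //.
  exact: borel_n_bigsetU.
rewrite -bigcup_seq -subset0 => u [Alu [l' /= l'r Al'u]].
have : (A l `&` A l') u by [].
by rewrite dA // => ll'; rewrite ll' l'r in lr.
Qed.

Section DecreasingToEmpty.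
Variable D : nat -> set 'rV[R]_n.
Hypotheses (bD : forall m, borel_n (D m)) (decrD : forall m, D m.+1 `<=` D m)
  (capD : \bigcap_m D m = set0).

Lemma decreasing_le m m' : (m <= m')%N -> D m' `<=` D m.
Proof.
move=> mm'; apply: (homo_leq (f := D) (r := fun A B => B `<=` A)) mm' => //.
- exact: subset_refl.
- by move=> B A C AB BC; exact: subset_trans BC AB.
Qed.

Let E m := D m `\` D m.+1.

Let bE m : borel_n (E m). Proof. exact: borel_nD. Qed.

Let E_disj m1 m2 : m1 <> m2 -> E m1 `&` E m2 = set0.
Proof.
wlog lt12 : m1 m2 / (m1 < m2)%N.
  move=> wlog_lt ne; case: (ltngtP m1 m2) => [lt12|lt21|eq12]; first exact: wlog_lt.
    by rewrite setIC; apply: wlog_lt => // eq21; apply: ne.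
  by move: ne; rewrite eq12.
by move=> _; rewrite -subset0 => u [[_ nD1] [D2 _]]; apply/nD1/(decreasing_le lt12).
Qed.

Let E_cover : \bigcup_m E m = D 0.
Proof.
apply/seteqP; split=> [u [m _ [Du _]]|u D0u]; first exact: (decreasing_le (leq0n m)).
have [m nDmu] : exists m, ~ D m u.
  apply: contrapT => /forallNP nD.
  have : (\bigcap_m D m) u by move=> m _; exact: contrapT (nD m).
  by rewrite capD.
elim: m nDmu => [//|m IH] nDmu.
by have [Dmu|/IH] := pselect (D m u); [exists m | ].
Qed.

Let psum_E_tail s : uniq s ->
  exists M, lexle le (psum s (fun m => x (E m)) + x (D M)) (x (D 0)).
Proof.
move=> us; exists (\max_(m <- s) m).+1.
rewrite psumE -observable_bigsetU // -observableU //; last first.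
- rewrite -bigcup_seq -subset0 => u [[m /= ms [_ nDmu]] DMu].
  by apply/nDmu/(decreasing_le _ DMu); rewrite ltnS; exact: (leq_bigmax_seq (F := id) m ms).
- exact: borel_n_bigsetU.
apply: le_observable => //; first by apply: borel_nU => //; exact: borel_n_bigsetU.
rewrite -bigcup_seq => u [[m _ [Dmu _]]|]; first exact: (decreasing_le (leq0n m)).
exact: decreasing_le.
Qed.

Lemma decreasing_fst0 : exists N, (x (D N)).1 = 0.
Proof.
apply: contrapT => /forallNP ne0.
have ge1 m : 1 <= (x (D m)).1.
  have := lexle_fst (observable_ge0 (bD m)); have := ne0 m; rewrite /=; lia.
have [_ supE] := observable_sigma bE E_disj; rewrite E_cover in supE.
have /(supM_fst_le supE) : forall y, (exists s, uniq s /\ y = psum s (fun m => x (E m))) ->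
    y.1 <= (x (D 0)).1 - 1.
  move=> _ [s [us ->]]; have [M /lexle_fst /= tail] := psum_E_tail us.
  by have := ge1 M; lia.
by have := ge1 0%N; lia.
Qed.

Lemma decreasing_lb_le0_of_inM w : (forall m, lexle le w (x (D m))) ->
  inM le k (x (D 0) - w) -> lexle le w 0.
Proof.
move=> wlb wM; have [_ [_ _ least]] := observable_sigma bE E_disj.
rewrite E_cover in least.
have /(least _ wM) : forall y, (exists s, uniq s /\ y = psum s (fun m => x (E m))) ->
    lexle le y (x (D 0) - w).
  move=> _ [s [us ->]]; have [M tail] := psum_E_tail us.
  rewrite -(lexleD2r _ _ w) subrK; apply: lexle_trans tail.
  by rewrite lexleD2l.
rewrite -[X in lexle _ X _]addr0 lexleD2l => /(lexleD2r _ _ w).2.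
by rewrite add0r addNr.
Qed.

End DecreasingToEmpty.

(* Past the index N where the first coordinate vanishes, x (D N) - w lies in
   the bottom layer of M, which is below the unit (k, 0) only because 0 < k. *)
Lemma decreasing_lb_le0 (D : nat -> set 'rV[R]_n) w : (0 < k)%N ->
  (forall m, borel_n (D m)) -> (forall m, D m.+1 `<=` D m) -> \bigcap_m D m = set0 ->
  (forall m, lexle le w (x (D m))) -> lexle le w 0.
Proof.
move=> k_gt0 bD decrD capD wlb; have [N DN0] := decreasing_fst0 bD decrD capD.
have [w_neg|w_ge0] := ltP w.1 0; first by left.
have w0 : w.1 = 0 by have := lexle_fst (wlb N); rewrite DN0; lia.
apply: (@decreasing_lb_le0_of_inM (fun m => D (N + m)%N)).
- by move=> m; exact: bD.
- by move=> m; rewrite addnS; exact: decrD.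
- rewrite -subset0 -capD => u DNu m _.
  exact: (decreasing_le decrD (leq_addl N m) (DNu m I)).
- by move=> m; exact: wlb.
- rewrite addn0; split; last by left; rewrite /= DN0 w0 subr0; lia.
  by have := (lexleD2r _ _ (- w)).2 (wlb N); rewrite subrr.
Qed.

Section DecreasingIntersection.
Variable C : nat -> set 'rV[R]_n.
Hypotheses (bC : forall m, borel_n (C m)) (decrC : forall m, C m.+1 `<=` C m).

Let B := \bigcap_m C m.
Let D m := C m `\` B.

Let bB : borel_n B. Proof. exact: borel_n_bigcap. Qed.
Let bD m : borel_n (D m). Proof. exact: borel_nD. Qed.
Let decrD m : D m.+1 `<=` D m. Proof. by move=> u [/decrC]. Qed.
Let capD : \bigcap_m D m = set0.
Proof. by rewrite -subset0 => u Du; have [_] := Du 0%N I; apply=> m _; case: (Du m I). Qed.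
Let xC m : x (C m) = x B + x (D m).
Proof. by apply: observableD => // u; exact. Qed.

Lemma observable_bigcap_fst : exists N, (x (C N)).1 = (x B).1.
Proof. by have [N DN0] := decreasing_fst0 bD decrD capD; exists N; rewrite xC /= DN0 addr0. Qed.

Lemma observable_bigcap_glb z : (0 < k)%N ->
  (forall m, lexle le z (x (C m))) -> lexle le z (x B).
Proof.
move=> k_gt0 zlb; rewrite -[z](subrK (x B)) -[X in lexle _ _ X]add0r lexleD2r.
apply: (decreasing_lb_le0 k_gt0 bD decrD capD) => m.
by rewrite -(lexleD2r _ _ (x B)) subrK addrC -xC.
Qed.

End DecreasingIntersection.

Lemma null_subset A B : borel_n A -> borel_n B -> A `<=` B ->
  (x B).1 = 0 -> (x A).1 = 0.
Proof.
move=> bA bB AB B0; have := lexle_fst (le_observable bA bB AB).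
by have := lexle_fst (observable_ge0 bA) => /=; lia.
Qed.

Lemma null_setU A B : borel_n A -> borel_n B -> (x A).1 = 0 -> (x B).1 = 0 ->
  (x (A `|` B)).1 = 0.
Proof.
move=> bA bB A0 B0; have bAB := borel_nU bA bB.
rewrite (observableD bA bAB (@subsetUl _ A B)) /= A0 add0r.
apply: (null_subset _ bB _ B0); first exact: borel_nD.
by move=> u [[Au|Bu] nAu].
Qed.

Lemma null_bigsetU (I : Type) (r : seq I) (A : I -> set 'rV[R]_n) :
  (forall l, borel_n (A l)) -> (forall l, (x (A l)).1 = 0) ->
  (x (\big[setU/set0]_(l <- r) A l)).1 = 0.
Proof.
move=> bA A0; elim: r => [|l r IH]; first by rewrite big_nil observable0.
by rewrite big_cons; apply: null_setU => //; exact: borel_n_bigsetU.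
Qed.

Lemma pi_ptE (i : int) v j :
  pi_pt x i v ord0 j = inf [set r | Tset x i (set_coord v j r)].
Proof. exact: mxE. Qed.

Lemma Fx_le v w : vle v w -> lexle le (Fx x v) (Fx x w).
Proof. by move=> vw; apply: le_observable; [exact: borel_n_box..|exact: box_subset]. Qed.

Lemma Fx_fst_diff v w : vle v w ->
  (Fx x w).1 = (Fx x v).1 + (x (box w `\` box v)).1.
Proof. by move=> vw; rewrite /Fx (observableD _ _ (box_subset vw)) //; exact: borel_n_box. Qed.

Lemma Tset_between (i : int) u v w : vle u v -> vle v w ->
  Tset x i u -> Tset x i w -> Tset x i v.
Proof.
move=> uv vw; rewrite /Tset /= => Tu Tw.
by have := lexle_fst (Fx_le uv); have := lexle_fst (Fx_le vw); lia.
Qed.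

Lemma Tset_of_coord_witnesses (i : int) s v : Tset x i s -> vle v s ->
  (forall l, exists2 r, Tset x i (set_coord s l r) & r <= v ord0 l) -> Tset x i v.
Proof.
move=> Ts vs wit.
have svs l : vle (set_coord s l (v ord0 l)) s.
  by move=> l'; rewrite set_coordE; case: eqP => [->|]; [exact: vs|].
have null_l l : (x (box s `\` box (set_coord s l (v ord0 l)))).1 = 0.
  have [r Tr rv] := wit l.
  have /Tset_between/(_ (svs l) Tr Ts) : vle (set_coord s l r) (set_coord s l (v ord0 l)).
    by move=> l'; rewrite !set_coordE; case: eqP.
  by move: Ts; rewrite /Tset /= (Fx_fst_diff (svs l)); lia.
have bnull l : borel_n (box s `\` box (set_coord s l (v ord0 l))).
  by apply: borel_nD; exact: borel_n_box.
have : (x (box s `\` box v)).1 = 0.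
  (* a point below s but not below v is not below one of the set_coord s l (v l) *)
  apply: (null_subset _ (borel_n_bigsetU (enum 'I_n) bnull) _ (null_bigsetU _ bnull null_l)).
  - by apply: borel_nD; exact: borel_n_box.
  - rewrite -bigcup_seq => u [us /existsNP [l /negP]]; rewrite -leNgt => vu.
    exists l; first by rewrite /= mem_enum.
    by split => // /(_ l); rewrite set_coordE eqxx ltNge vu.
by move: Ts; rewrite /Tset /= (Fx_fst_diff vs); lia.
Qed.

Section CharacteristicPoint.
Variables (i : int) (s t : 'rV[R]_n).
Hypotheses (Ts : Tset x i s) (pt : vlt (pi_pt x i s) t) (ts : vle t s).
Local Notation p := (pi_pt x i s).

Lemma pi_coord_witness l (c : R) : p ord0 l < c -> exists2 r, Tset x i (set_coord s l r) & r < c.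
Proof. by rewrite pi_ptE; apply: inf_lt; exists (s ord0 l); rewrite /= set_coord_id. Qed.

Lemma Tset_of_pi_lt v : vlt p v -> vle v s -> Tset x i v.
Proof.
move=> pv vs; apply: Tset_of_coord_witnesses Ts vs _ => l.
by have [r Tr /ltW rv] := pi_coord_witness (pv l); exists r.
Qed.

Lemma pi_pt_of_pi_lt : pi_pt x i t = p.
Proof.
apply/rowP => j; rewrite !pi_ptE (@inf_setI_le _ _ (t ord0 j)); last first.
  by exists (t ord0 j); rewrite /= ?set_coord_id //; exact: Tset_of_pi_lt.
rewrite [RHS](@inf_setI_le _ _ (t ord0 j)); last first.
  by have [r Tr /ltW rt] := pi_coord_witness (pt j); exists r.
congr inf; apply/seteqP; split=> r [Tr rt]; split=> //=.
  apply: Tset_between Tr Ts => l; rewrite !set_coordE.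
  - by case: eqP => // _; exact: ts.
  - by case: eqP => [->|_] //; exact: le_trans rt (ts j).
apply: Tset_of_coord_witnesses Ts _ _ => [l|l].
  by rewrite set_coordE; case: eqP => [->|_]; [exact: le_trans rt (ts j)|].
rewrite set_coordE; case: eqP => [->|_]; first by exists r.
by have [r' Tr' /ltW r't] := pi_coord_witness (pt l); exists r'.
Qed.

Lemma pi_coord_inf j :
  p ord0 j = inf [set t' ord0 j | t' in [set t' | vlt p t' /\ vle t' s]].
Proof.
have ps l : p ord0 l < s ord0 l by exact: lt_le_trans (pt l) (ts l).
suff -> : [set t' ord0 j | t' in [set t' | vlt p t' /\ vle t' s]] = [set` `]p ord0 j, s ord0 j]].
  by rewrite inf_itv // bnd_simp.
apply/seteqP; split=> [_ [t' [pt' t's] <-]|r]; first by rewrite /= in_itv /= pt' t's.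
rewrite /= in_itv /= => /andP[pr rs]; exists (set_coord s j r); last first.
  by rewrite set_coordE eqxx.
by split=> l; rewrite set_coordE; case: eqP => [->|_].
Qed.

Lemma Fx_infM_Mj : (0 < k)%N ->
  exists a, is_infM le k [set Fx x t' | t' in [set t' | vlt p t' /\ vle t' s]] a
            /\ Mj le k i a.
Proof.
move=> k_gt0.
pose tm m : 'rV[R]_n := \row_l Num.min (t ord0 l) (p ord0 l + m.+1%:R^-1).
have tm_gt m : vlt p (tm m).
  by move=> l; rewrite [X in _ < X]mxE lt_min pt ltrDl invr_gt0 ltr0Sn.
have tm_le m : vle (tm m) s by move=> l; rewrite mxE ge_min ts.
have tm_decr m : vle (tm m.+1) (tm m).
  move=> l; rewrite ![tm _ _ _]mxE le_min !ge_min lexx /= lerD2l lef_pV2 ?posrE //.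
  by rewrite ler_nat ltnS leqnSn orbT.
pose B := \bigcap_m box (tm m).
have bB : borel_n B by apply: borel_n_bigcap => m; exact: borel_n_box.
have B_sub t' : vlt p t' -> B `<=` box t'.
  move=> pt' u Bu l; apply: le_lt_trans (pt' l); apply: le_of_lt_addinvS => m.
  by apply: lt_le_trans (Bu m I l) _; rewrite mxE ge_min lexx orbT.
exists (x B); split; first split.
- exact: observable_inM.
- move=> _ [t' [pt' _] <-]; apply: le_observable bB (borel_n_box _) (B_sub _ pt').
- move=> z _ zlb; apply: observable_bigcap_glb => // [m|m|m].
  + exact: borel_n_box.
  + exact: box_subset.
  + by apply: zlb; exists (tm m).
- split; first exact: observable_inM.
  have [N <-] : exists N, (x (box (tm N))).1 = (x B).1.
    by apply: observable_bigcap_fst => m; [exact: borel_n_box | exact: box_subset].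
  exact: Tset_of_pi_lt.
Qed.

End CharacteristicPoint.

End Observable.

End LGroup.

Unset Implicit Arguments. Set Strict Implicit.

Theorem lemma4p2 (R : realType) (G : zmodType) (le : G -> G -> Prop) (k n : nat)
  (x : set 'rV[R]_n -> int * G) (i : nat) (s t : 'rV[R]_n) :
  (1 <= k)%N -> (1 <= n)%N -> dsc_lgroup le -> observable le k x ->
  (1 <= i <= k)%N -> Tset x i s ->
  vlt (pi_pt x i s) t -> vle t s ->
  [/\ Tset x i t, approx_i x i t s,
      (forall j : 'I_n, pi_pt x i s ord0 j =
         inf [set t' ord0 j | t' in [set t' | vlt (pi_pt x i s) t' /\ vle t' s]]) &
      exists a : int * G,
        is_infM le k [set Fx x t' | t' in [set t' | vlt (pi_pt x i s) t' /\ vle t' s]] a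
        /\ Mj le k i a].
Proof.
move=> k_gt0 _ leG obs_x _ Ts pt ts.
have Tt := Tset_of_pi_lt leG obs_x Ts pt ts.
split=> //.
- by split=> //; exact: (pi_pt_of_pi_lt leG obs_x Ts pt ts).
- exact: pi_coord_inf pt ts.
- exact: (Fx_infM_Mj leG obs_x Ts pt ts k_gt0).
Qed.
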